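(* Let $A\in\mathrm{SL}(n,\mathbb{C})$ have Jordan canonical form consisting of Jordan blocks $J(\lambda_1,n_1),\dots,J(\lambda_k,n_k)$ (with all $\lambda_i\neq 0$). Then $A$ is $c$-reversible if and only if this collection of blocks can be partitioned into pairs $\{J(\lambda,m),J(\overline{\lambda}^{-1},m)\}$ with $\lambda\in\mathbb{C}\setminus\{0\}$, $|\lambda|\neq 1$, and singletons $\{J(\mu,m)\}$ with $|\mu|=1$.
   Context: $J(\lambda,m)$ denotes the $m\times m$ Jordan block with eigenvalue $\lambda$ ($\lambda$ on the diagonal, $1$ on the superdiagonal, $0$ elsewhere). $\overline{g}$ denotes entrywise complex conjugation. $g\in\mathrm{SL}(n,\mathbb{C})$ is $c$-reversible if there exists $h\in\mathrm{SL}(n,\mathbb{C})$ with $hgh^{-1}=\overline{g}^{-1}$. *)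

From HB Require Import structures.
From mathcomp Require Import all_boot all_order all_algebra.
From mathcomp Require Import complex.
From mathcomp Require Import reals.
Set Implicit Arguments. Unset Strict Implicit. Unset Printing Implicit Defensive.
Import Order.TTheory GRing.Theory Num.Theory.
Local Open Scope ring_scope.

Definition jordan_block {F : nzRingType} (lam : F) (m : nat) : 'M[F]_m :=
  \matrix_(i < m, j < m)
     (if i == j then lam else if (j : nat) == i.+1 then 1 else 0).

Definition conj_mx {C : numClosedFieldType} {m n : nat} (g : 'M[C]_(m, n)) :
  'M[C]_(m, n) := map_mx Num.conj g.

Definition in_SL {C : numClosedFieldType} {n : nat} (g : 'M[C]_n) : Prop :=
  \det g = 1.

Definition c_reversible {C : numClosedFieldType} {n : nat} (g : 'M[C]_n) : Prop :=
  exists h : 'M[C]_n, in_SL h /\ h *m g *m invmx h = invmx (conj_mx g).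

Definition has_jordan_form {C : numClosedFieldType} {n k : nat} (A : 'M[C]_n)
  (lam : 'I_k -> C) (m : 'I_k -> nat) : Prop :=
  (forall i, (0 < m i)%N) /\
  exists hn : (\sum_(i < k) m i)%N = n,
  exists P : 'M[C]_n, P \in unitmx /\
    P *m A *m invmx P =
      castmx (hn, hn) (\mxdiag_(i < k) jordan_block (lam i) (m i)).

From HB Require Import structures.
From mathcomp Require Import all_boot all_order all_algebra.
From mathcomp Require Import complex.
From mathcomp Require Import reals.
From mathcomp Require Import fingroup perm zify.
Set Implicit Arguments. Unset Strict Implicit. Unset Printing Implicit Defensive.
Import Order.TTheory GRing.Theory Num.Theory.
Local Open Scope ring_scope.

(* Over an algebraically closed field a conjugating matrix can be rescaled to
   determinant 1, so A is c-reversible iff A is similar to (conj A)^-1.  If J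
   is the Jordan form of A, then (conj A)^-1 is similar to J with every block
   J(l, m) replaced by J(conj(l)^-1, m), because J(c, m)^-1 - c^-1 is
   nilpotent of maximal index.  Two Jordan matrices with the same block sizes
   are similar iff each pair (eigenvalue, size) occurs equally often in both:
   the ranks of (J - mu)^p determine these counts, and conversely equal counts
   give a permutation of the blocks.  Finally, the multiset of pairs
   (l_i, m_i) is invariant under l |-> conj(l)^-1, an involution whose fixed
   points are the unimodular numbers, iff the blocks split into fixed
   singletons and swapped pairs. *)

Section Similarity.
Variable F : fieldType.
Implicit Types (n : nat).

Lemma similar_sym n (A B : 'M[F]_n) :
  similar_in unitmx A B -> similar_in unitmx B A.
Proof.
case=> P uP /eqP <-; exists (invmx P); rewrite ?unitmx_inv //.
by apply/eqP; rewrite conjmxK.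
Qed.

Lemma similar_trans n (A B C : 'M[F]_n) :
  similar_in unitmx A B -> similar_in unitmx B C -> similar_in unitmx A C.
Proof.
case=> P uP /eqP <- [Q uQ /eqP <-]; exists (Q *m P); first by rewrite unitmx_mul uQ.
by apply/eqP; rewrite conjuMumx.
Qed.

Lemma similar_congr n (A A' B B' : 'M[F]_n) :
  similar_in unitmx A A' -> similar_in unitmx B B' ->
  similar_in unitmx A B <-> similar_in unitmx A' B'.
Proof.
move=> AA' BB'; split=> [AB | A'B'].
  exact: similar_trans (similar_sym AA') (similar_trans AB BB').
exact: similar_trans AA' (similar_trans A'B' (similar_sym BB')).
Qed.

Lemma similar_add_scalar n (A B : 'M[F]_n) (a : F) :
  similar_in unitmx A B -> similar_in unitmx (A + a%:M) (B + a%:M).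
Proof.
case=> P uP /eqP <-; exists P => //; apply/eqP.
by rewrite /conjmx mulmxDr mulmxDl scalar_mxC mulmxKp ?row_free_unit.
Qed.

Lemma similar_exp n (A B : 'M[F]_n) p :
  similar_in unitmx A B -> similar_in unitmx (A ^+ p) (B ^+ p).
Proof.
case=> P uP /eqP <-; exists P => //; apply/eqP; elim: p => [|p IHp].
  by rewrite !expr0 -idmxE conjmx_scalar ?row_free_unit.
by rewrite !exprSr -!mulmxE conjmxM ?inE ?stablemx_unit // IHp.
Qed.

Lemma similar_rank n (A B : 'M[F]_n) : similar_in unitmx A B -> \rank A = \rank B.
Proof.
case=> P uP /eqP <-; rewrite conjumx // mxrankMfree ?row_free_unit ?unitmx_inv //.
by rewrite eqmxMfull ?row_full_unit.
Qed.

Lemma unitmx_exp n (A : 'M[F]_n) p : A \in unitmx -> A ^+ p \in unitmx.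
Proof.
move=> uA; elim: p => [|p IHp]; first by rewrite expr0 -idmxE unitmx1.
by rewrite exprS -mulmxE unitmx_mul uA.
Qed.

Lemma invmx_uniq n (A B : 'M[F]_n) : A *m B = 1%:M -> invmx A = B.
Proof.
move=> AB; have [uA _] := mulmx1_unit AB.
by rewrite -[RHS](mulKmx uA) AB mulmx1.
Qed.

Lemma similar_invmx n (A B : 'M[F]_n) :
  similar_in unitmx A B -> similar_in unitmx (invmx A) (invmx B).
Proof.
case=> P uP /(similarRL uP) ->; exists P => //; apply/similarRL => //.
have [uA | nuA] := boolP (A \in unitmx); last first.
  (* [invmx] is the identity on singular matrices. *)
  rewrite [invmx (_ *m _)]invmx_out ?[invmx A]invmx_out ?inE //.
  by rewrite !unitmx_mul unitmx_inv uP (negbTE nuA).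
apply: invmx_uniq; rewrite !mulmxA (mulmxKV uP) (mulmxK uA).
exact: mulmxV.
Qed.

Lemma similar_map (F' : fieldType) (f : {rmorphism F -> F'}) n
    (A B : 'M[F]_n) :
  similar_in unitmx A B -> similar_in unitmx (map_mx f A) (map_mx f B).
Proof.
case=> P uP /(similarRL uP) ->; exists (map_mx f P); first by rewrite map_unitmx.
by apply/similarRL; rewrite ?map_unitmx // !map_mxM map_invmx.
Qed.

End Similarity.

Section BlockDiagonal.
Variables (F : fieldType) (k : nat) (p_ : 'I_k -> nat).
Implicit Types B C : forall i, 'M[F]_(p_ i).

Lemma mul_mxdiag B C : mxdiag B *m mxdiag C = \mxdiag_i (B i *m C i).
Proof.
rewrite {2}/mxdiag mul_mxdiag_mxblock /mxdiag; apply/eq_mxblock => i j.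
by case: eqP => [<-|_]; rewrite ?conform_mx_id ?mulmx0.
Qed.

Lemma mxdiag_exp B p : mxdiag B ^+ p = \mxdiag_i (B i ^+ p).
Proof.
elim: p => [|p IHp]; first by rewrite expr0 -idmxE -mxdiagZ; apply: eq_mxdiag.
by rewrite exprS -mulmxE IHp mul_mxdiag; apply: eq_mxdiag => i; rewrite exprS.
Qed.

Lemma mxdiag_mulmxV B : (forall i, B i \in unitmx) ->
  mxdiag B *m \mxdiag_i invmx (B i) = 1%:M.
Proof.
by move=> uB; rewrite mul_mxdiag -mxdiagZ; apply: eq_mxdiag => i; rewrite mulmxV.
Qed.

Lemma unitmx_mxdiag B : (forall i, B i \in unitmx) -> mxdiag B \in unitmx.
Proof. by move/mxdiag_mulmxV/mulmx1_unit => []. Qed.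

Lemma invmx_mxdiag B : (forall i, B i \in unitmx) ->
  invmx (mxdiag B) = \mxdiag_i invmx (B i).
Proof. by move/mxdiag_mulmxV/invmx_uniq. Qed.

Lemma map_mxdiag (f : {rmorphism F -> F}) B :
  map_mx f (mxdiag B) = \mxdiag_i map_mx f (B i).
Proof.
apply/matrixP => s t; rewrite !mxE.
move: (tagnat.sig2 s) (tagnat.sig2 t); move: (tagnat.sig1 s) (tagnat.sig1 t) => i j a b.
case: eqP => [e|_]; last by rewrite !mxE rmorph0.
by subst j; rewrite !conform_mx_id mxE.
Qed.

Lemma similar_mxdiag B C : (forall i, similar_in unitmx (B i) (C i)) ->
  similar_in unitmx (mxdiag B) (mxdiag C).
Proof.
move=> simBC; have {}simBC i : exists P, (P \in unitmx) && similar P (B i) (C i).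
  by have [P uP PBC] := simBC i; exists P; rewrite uP.
pose P i := xchoose (simBC i); have /(_ _)/andP PP i := xchooseP (simBC i).
have uP i : P i \in unitmx by have [] := PP i.
exists (mxdiag P); first exact: unitmx_mxdiag.
apply/similarRL; first exact: unitmx_mxdiag.
rewrite invmx_mxdiag // !mul_mxdiag; apply: eq_mxdiag => i.
by have [_ /(similarRL (uP i))] := PP i.
Qed.

Lemma mxdiag_matrixE (f : 'I_k -> nat -> nat -> F) s t :
  (\mxdiag_i (\matrix_(a < p_ i, b < p_ i) f i a b)) s t =
  if tagnat.sig1 s == tagnat.sig1 t
  then f (tagnat.sig1 s) (tagnat.sig2 s) (tagnat.sig2 t) else 0.
Proof.
rewrite !mxE; move: (tagnat.sig2 s) (tagnat.sig2 t).
move: (tagnat.sig1 s) (tagnat.sig1 t) => i j a b.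
case: eqP => [e|_]; last by rewrite !mxE.
by subst j; rewrite !conform_mx_id mxE.
Qed.

Lemma invmx_perm_mx n (s : 'S_n) : invmx (perm_mx s : 'M[F]_n) = perm_mx s^-1.
Proof. by apply: invmx_uniq; rewrite -perm_mxM mulgV perm_mx1. Qed.

Lemma similar_perm_mxdiag (sg : 'I_k -> 'I_k) (f : 'I_k -> nat -> nat -> F) :
  injective sg -> (forall i, p_ (sg i) = p_ i) ->
  similar_in unitmx (\mxdiag_i (\matrix_(a < p_ i, b < p_ i) f i a b))
                    (\mxdiag_i (\matrix_(a < p_ i, b < p_ i) f (sg i) a b)).
Proof.
move=> sg_inj p_sg.
have lt_sg i (a : 'I_(p_ i)) : (a < p_ (sg i))%N by rewrite p_sg.
(* [t] sends position [a] of block [i] to position [a] of block [sg i]. *)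
pose t (s : 'I_(\sum_i p_ i)) : 'I_(\sum_i p_ i) :=
  @tagnat.Rank _ p_ (sg (tagnat.sig1 s)) (Ordinal (lt_sg _ (tagnat.sig2 s))).
have t1 s : tagnat.sig1 (t s) = sg (tagnat.sig1 s) by rewrite tagnat.Rank1K.
have t2 s : tagnat.sig2 (t s) = tagnat.sig2 s :> nat by rewrite tagnat.Rank2K.
have t_inj : injective t.
  move=> s s' ts; rewrite -(tagnat.sig2K s) -(tagnat.sig2K s').
  apply/val_inj/eqP; rewrite tagnat.eq_Rank -(inj_eq sg_inj) -!t1 ts eqxx /=.
  by rewrite -(t2 s) -(t2 s') ts.
exists (perm_mx (perm t_inj)); rewrite ?unitmx_perm //.
apply/similarRL; rewrite ?unitmx_perm // invmx_perm_mx -col_permE -row_permE.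
apply/matrixP => s s'.
have -> X : col_perm (perm t_inj) (row_perm (perm t_inj) X) s s' = X (t s) (t s').
  by rewrite !mxE !permE.
rewrite !mxdiag_matrixE !t2 !t1 (inj_eq sg_inj).
by rewrite (mxdiag_matrixE (fun i => f (sg i))).
Qed.

End BlockDiagonal.

Section JordanBlock.
Variable R : comNzRingType.
Implicit Types (c : R) (m p : nat).

Lemma jordan_blockE c m : jordan_block c m = c%:M + jordan_block 0 m.
Proof.
apply/matrixP => i j; rewrite !mxE.
by case: (i == j); rewrite ?mulr1n ?mulr0n ?addr0 ?add0r.
Qed.

Lemma jordan_block0_exp m p (i j : 'I_m) :
  (jordan_block (0 : R) m ^+ p) i j = ((j : nat) == i + p)%N%:R.
Proof.
elim: p i j => [|p IHp] i j; first by rewrite expr0 !mxE addn0 eq_sym.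
rewrite exprSr -mulmxE mxE; case: (ltnP (i + p) m) => [ltipm | leqmip].
  rewrite (bigD1 (Ordinal ltipm)) //= big1 => [|l /eqP nl]; last first.
    rewrite IHp; case: eqP => [e|]; last by rewrite mul0r.
    by case: nl; apply: val_inj.
  rewrite IHp !mxE eqxx mul1r addr0 addnS /=.
  case: eqP => [<-|_]; last by case: (_ == _).
  by rewrite /= ltn_eqF.
rewrite big1 => [|l _]; last first.
  by rewrite IHp; case: eqP => [e|]; [move: (ltn_ord l); lia | rewrite mul0r].
by case: eqP => // e; move: (ltn_ord j); lia.
Qed.

Lemma det_jordan_block c m : \det (jordan_block c m) = c ^+ m.
Proof.
rewrite -det_tr det_trig; last first.
  apply/is_trig_mxP => i j ltij; rewrite !mxE -val_eqE (gtn_eqF ltij).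
  by case: eqP => // e; move: ltij; lia.
by rewrite (eq_bigr (fun=> c)) ?prodr_const ?card_ord // => i _; rewrite !mxE eqxx.
Qed.

Lemma map_jordan_block (S : nzRingType) (f : {rmorphism R -> S}) c m :
  map_mx f (jordan_block c m) = jordan_block (f c) m.
Proof.
apply/matrixP => i j; rewrite !mxE.
by case: (i == j) => //; case: (_ == _); rewrite ?rmorph1 ?rmorph0.
Qed.

End JordanBlock.

Section JordanBlockField.
Variable F : fieldType.
Implicit Types (c : F) (m p : nat).

Lemma unitmx_jordan_block c m : c != 0 -> jordan_block c m \in unitmx.
Proof. by move=> c0; rewrite unitmxE det_jordan_block unitfE expf_neq0. Qed.

Lemma rank_jordan_block0_exp m p : \rank (jordan_block (0 : F) m ^+ p) = (m - p)%N.
Proof.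
case: m => [|m]; first by rewrite flatmx0 mxrank0.
pose shift (i : 'I_m.+1) : 'I_m.+1 := Ordinal (@ltn_pmod (i + p) m.+1 isT).
have shift_inj : injective shift.
  move=> i j /(congr1 val) /= /eqP; rewrite eqn_modDr !modn_small //.
  by move/eqP/val_inj.
have -> : jordan_block (0 : F) m.+1 ^+ p =
          pid_mx (m.+1 - p) *m perm_mx (perm shift_inj).
  apply/matrixP => i j; rewrite jordan_block0_exp mxE (bigD1 i) //= big1 ?addr0.
    rewrite !mxE eqxx /= permE.
    case: (ltnP i (m.+1 - p)) => lt_i; rewrite ?mul1r ?mul0r.
      by rewrite /shift -val_eqE /= modn_small 1?eq_sym //; lia.
    by case: eqP => // e; move: (ltn_ord j); lia.
  move=> l /negbTE nli; rewrite !mxE.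
  by case: eqP => [/val_inj e|]; [move: nli; rewrite e eqxx | rewrite mul0r].
by rewrite mxrankMfree ?row_free_unit ?unitmx_perm // rank_pid_mx //; lia.
Qed.

Lemma rank_jordan_block_sub_exp (a mu : F) m p :
  \rank ((jordan_block a m - mu%:M) ^+ p) = if a == mu then (m - p)%N else m.
Proof.
have -> : jordan_block a m - mu%:M = jordan_block (a - mu) m.
  by rewrite (jordan_blockE a) (jordan_blockE (a - mu)) addrAC raddfB.
case: eqP => [->|/eqP neq_a_mu]; first by rewrite subrr rank_jordan_block0_exp.
by rewrite mxrank_unit // unitmx_exp ?unitmx_jordan_block ?subr_eq0.
Qed.

Lemma row_free_krylov m (M : 'M[F]_m) (v : 'rV_m) :
  M ^+ m = 0 -> v *m M ^+ m.-1 != 0 ->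
  row_free (\matrix_(i < m) (v *m M ^+ i)).
Proof.
move=> Mm0 vM_neq0; apply: inj_row_free => w wK.
have sum0 s : \sum_(l < m) w 0 l *: (v *m M ^+ (l + s)%N) = 0.
  transitivity (w *m \matrix_(i < m) (v *m M ^+ i) *m M ^+ s).
    rewrite (mulmx_sum_row w) mulmx_suml; apply: eq_bigr => l _.
    by rewrite rowK -scalemxAl -mulmxA mulmxE -exprD.
  by rewrite wK mul0mx.
(* Multiplying the combination by [M ^+ (m.-1 - j)] kills the terms after [j]. *)
suff w_eq0 t (j : 'I_m) : (j < t)%N -> w 0 j = 0.
  by apply/rowP => j; rewrite (w_eq0 m) ?mxE.
elim: t j => [//|t IHt] j; rewrite ltnS leq_eqVlt => /predU1P[jt | /IHt //].
have lt_jm := ltn_ord j.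
have := sum0 (m.-1 - j)%N; rewrite (bigD1 j) //= big1 ?addr0 => [|l nlj].
  rewrite (_ : j + _ = m.-1)%N; last by lia.
  by move/eqP; rewrite scaler_eq0 (negbTE vM_neq0) orbF => /eqP.
have lt_lm := ltn_ord l.
case: (ltngtP l j) => [lt_lj | lt_jl | /val_inj e]; last by rewrite e eqxx in nlj.
  by rewrite IHt ?scale0r // -jt.
rewrite (_ : l + _ = m + (l + m.-1 - j - m))%N; last by lia.
by rewrite exprD Mm0 mul0r mulmx0 scaler0.
Qed.

Lemma similar_jordan_block0 m (M : 'M[F]_m) :
  M ^+ m = 0 -> M ^+ m.-1 != 0 -> similar_in unitmx M (jordan_block 0 m).
Proof.
move=> Mm0 /matrix0Pn[r [j Mrj]].
pose v : 'rV[F]_m := delta_mx 0 r.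
have vM_neq0 : v *m M ^+ m.-1 != 0.
  by apply: contra Mrj => /eqP/rowP/(_ j); rewrite -rowE !mxE => ->.
set Q := \matrix_(i < m) (v *m M ^+ i).
have uQ : Q \in unitmx by rewrite -row_free_unit row_free_krylov.
exists Q => //; apply/similarP => //; apply/row_matrixP => i.
rewrite !row_mul rowK -mulmxA mulmxE -exprSr.
case: (ltnP i.+1 m) => [lt_im | le_mi].
  have -> : row i (jordan_block (0 : F) m) = delta_mx 0 (Ordinal lt_im).
    apply/rowP => l; rewrite !mxE eqxx -!val_eqE /=.
    by case: eqP => [<-|_]; [rewrite ltn_eqF | case: (_ == _)].
  by rewrite -[RHS]rowE rowK.
have -> : row i (jordan_block (0 : F) m) = 0.
  apply/rowP => l; rewrite !mxE; case: eqP => // _.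
  by case: eqP => // e; move: (ltn_ord l); lia.
by rewrite mul0mx (_ : i.+1 = m) ?Mm0 ?mulmx0 //; move: (ltn_ord i); lia.
Qed.

Lemma similar_invmx_jordan_block c m : c != 0 -> (0 < m)%N ->
  similar_in unitmx (invmx (jordan_block c m)) (jordan_block c^-1 m).
Proof.
move=> c_neq0; case: m => [//|m] _.
set J := jordan_block c m.+1; set N := jordan_block (0 : F) m.+1.
have uJ : J \in unitmx by apply: unitmx_jordan_block.
have JN : J *m N = N *m J by rewrite /J jordan_blockE mulmxDl mulmxDr scalar_mxC.
have JiN : invmx J *m N = N *m invmx J.
  by rewrite -[LHS](mulmxK uJ) -(mulmxA (invmx J)) -JN mulmxA mulVmx // mul1mx.
have M_exp p : (invmx J - c^-1%:M) ^+ p = (- c^-1) ^+ p *: (invmx J ^+ p *m N ^+ p).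
  have -> : invmx J - c^-1%:M = - c^-1 *: (invmx J *m N).
    rewrite -[LHS](mulKmx uJ) scalemxAr; congr (_ *m _).
    rewrite mulmxBr mulmxV // mul_mx_scalar /J jordan_blockE scalerDr.
    by rewrite scale_scalar_mx mulVf // scaleNr opprD addrA subrr add0r.
  by rewrite exprZn mulmxE exprMn_comm.
have Nm0 : N ^+ m.+1 = 0.
  apply/matrixP => i j; rewrite jordan_block0_exp mxE.
  by case: eqP => // e; move: (ltn_ord j); lia.
have Nm1 : N ^+ m != 0.
  by apply/matrix0Pn; exists 0, ord_max; rewrite jordan_block0_exp /= add0n eqxx oner_eq0.
have /similar_jordan_block0 : (invmx J - c^-1%:M) ^+ m.+1 = 0.
  by rewrite M_exp Nm0 mulmx0 scaler0.
case.
  rewrite M_exp scaler_eq0 negb_or expf_neq0 ?oppr_eq0 ?invr_eq0 //=.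
  have uJm : invmx J ^+ m \in unitmx by rewrite unitmx_exp ?unitmx_inv.
  by apply: contra Nm1 => /eqP JNm0; rewrite -(mulKmx uJm (N ^+ m)) JNm0 mulmx0.
move=> P uP PMN; have := similar_add_scalar c^-1 (ex_intro2 _ _ P uP PMN).
by rewrite subrK /J [jordan_block c^-1 _]jordan_blockE addrC.
Qed.

End JordanBlockField.

Section Fibers.
Variables (I : finType) (T : eqType).
Implicit Types (f g : I -> T).

Let fiber g t := enum [set i | g i == t].

Let mem_fiber g i : i \in fiber g (g i).
Proof. by rewrite mem_enum inE. Qed.

(* [sg] sends the n-th element of the [g]-fibre of [g i] to the n-th element
   of its [f]-fibre. *)
Lemma fiber_matching f g :
  (forall t, #|[set i | f i == t]| = #|[set i | g i == t]|) ->
  exists2 sg : I -> I, injective sg & forall i, f (sg i) = g i.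
Proof.
move=> card_fib; pose sg i := nth i (fiber f (g i)) (index i (fiber g (g i))).
have lt_idx i : (index i (fiber g (g i)) < size (fiber f (g i)))%N.
  by rewrite -cardE card_fib cardE index_mem mem_fiber.
have f_sg i : f (sg i) = g i.
  by have := mem_nth i (lt_idx i); rewrite mem_enum inE => /eqP.
exists sg => // i j sg_ij; have g_ij : g i = g j by rewrite -!f_sg sg_ij.
move: sg_ij; rewrite /sg (set_nth_default i j (lt_idx j)) -g_ij => /eqP.
rewrite nth_uniq ?enum_uniq ?lt_idx ?g_ij ?lt_idx // => /eqP.
by apply: (index_inj i); [rewrite -g_ij |]; apply: mem_fiber.
Qed.

Lemma involution_of_fibers (phi : T -> T) g : involutive phi ->
  (forall t, #|[set i | g i == t]| = #|[set i | g i == phi t]|) ->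
  exists sg : I -> I, [/\ involutive sg, forall i, g (sg i) = phi (g i)
                        & forall i, phi (g i) = g i -> sg i = i].
Proof.
move=> phiK card_fib.
pose sg i := nth i (fiber g (phi (g i))) (index i (fiber g (g i))).
have lt_idx i : (index i (fiber g (g i)) < size (fiber g (phi (g i))))%N.
  by rewrite -cardE -card_fib cardE index_mem mem_fiber.
have g_sg i : g (sg i) = phi (g i).
  by have := mem_nth i (lt_idx i); rewrite mem_enum inE => /eqP.
have sg_fix i : phi (g i) = g i -> sg i = i.
  by move=> gi_fix; rewrite /sg gi_fix nth_index ?mem_fiber.
exists sg; split=> // i; rewrite {1}/sg g_sg phiK index_uniq ?enum_uniq //.
by rewrite (set_nth_default i) ?nth_index ?index_mem ?mem_fiber.
Qed.

End Fibers.

Definition block_count (T : eqType) k (lam : 'I_k -> T) (m : 'I_k -> nat) z s :=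
  #|[set i | (lam i, m i) == (z, s)]|.

Section Pairing.
Variables (T : eqType) (phi : T -> T) (k : nat) (lam : 'I_k -> T) (m : 'I_k -> nat).
Hypothesis phiK : involutive phi.

Definition block_pairing (P : {set {set 'I_k}}) :=
  partition P [set: 'I_k] /\
  forall B, B \in P ->
    (exists i, B = [set i] /\ phi (lam i) = lam i) \/
    (exists i j, i != j /\ B = [set i; j] /\ m j = m i /\
                 lam j = phi (lam i) /\ phi (lam i) != lam i).

Lemma block_count_pairing P : block_pairing P ->
  forall z s, block_count lam m z s = block_count (phi \o lam) m z s.
Proof.
move=> [partP P_blocks] z s.
have count_blocks (h : 'I_k -> T) : block_count h m z s =
    (\sum_(B in P) \sum_(i in B) ((h i, m i) == (z, s) : nat))%N.
  rewrite /block_count -sum1dep_card big_mkcond -(set_partition_big _ partP).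
  by apply: eq_big => [i|i _]; rewrite ?in_setT //; case: (_ == _).
rewrite !count_blocks /=; apply: eq_bigr => B /P_blocks[[i [-> lam_fix]] | ].
  by rewrite !big_set1 lam_fix.
move=> [i [j [nij [-> [mj [lamj _]]]]]].
by rewrite !big_setU1 ?inE // !big_set1 mj lamj phiK /= addnC.
Qed.

Lemma block_pairing_of_involution (sg : 'I_k -> 'I_k) : involutive sg ->
  (forall i, lam (sg i) = phi (lam i) /\ m (sg i) = m i) ->
  (forall i, phi (lam i) = lam i -> sg i = i) ->
  exists P, block_pairing P.
Proof.
move=> sgK sg_lam_m sg_fix; pose R i j := (j == i) || (j == sg i).
exists (equivalence_partition R [set: 'I_k]); split.
  apply: equivalence_partitionP => i j l _ _ _; split; first by rewrite /R eqxx.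
  by rewrite /R => /orP[] /eqP ->; rewrite ?sgK 1?orbC.
move=> _ /imsetP[i _ ->]; have [lam_sg m_sg] := sg_lam_m i.
have [sg_i | nsg_i] := eqVneq (sg i) i.
  left; exists i; split; last by rewrite -lam_sg sg_i.
  by apply/setP => j; rewrite !inE /R sg_i orbb.
right; exists i, (sg i); do ![split] => //; first by rewrite eq_sym.
  by apply/setP => j; rewrite !inE.
by apply: contra_neq nsg_i; apply: sg_fix.
Qed.

Lemma block_pairingP :
  (exists P, block_pairing P) <->
  (forall z s, block_count lam m z s = block_count (phi \o lam) m z s).
Proof.
split=> [[P /block_count_pairing] //|count_eq].
pose phi2 (t : T * nat) := (phi t.1, t.2).
have phi2K : involutive phi2 by case=> z s; rewrite /phi2 phiK.
have [|sg [sgK sg_phi sg_fix]] :=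
  involution_of_fibers (g := fun i => (lam i, m i)) phi2K.
  case=> z s; rewrite [LHS]count_eq /block_count; apply: eq_card => i.
  by rewrite !inE !xpair_eqE /= inv_eq.
apply: (block_pairing_of_involution sgK) => [i | i lam_fix].
  by have [-> ->] := sg_phi i.
by apply: sg_fix; rewrite /phi2 /= lam_fix.
Qed.

End Pairing.

Definition jordan_mx (R : nzRingType) k (lam : 'I_k -> R) (m : 'I_k -> nat) :
  'M[R]_(\sum_i m i) := \mxdiag_i jordan_block (lam i) (m i).

Section JordanMatrix.
Variables (F : fieldType) (k : nat) (m : 'I_k -> nat).
Hypothesis m_gt0 : forall i, (0 < m i)%N.
Implicit Types lam : 'I_k -> F.

Lemma rank_jordan_mx_sub_exp lam mu p :
  \rank ((jordan_mx lam m - mu%:M) ^+ p) =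
  (\sum_i (if lam i == mu then m i - p else m i))%N.
Proof.
rewrite /jordan_mx -mxdiagZ -mxdiagB mxdiag_exp rank_mxdiag.
by apply: eq_bigr => i _; rewrite rank_jordan_block_sub_exp.
Qed.

Lemma card_size_eq_of_rank_sums (x y : 'I_k -> bool) :
  (forall p, \sum_i (if x i then m i - p else m i) =
             \sum_i (if y i then m i - p else m i))%N ->
  forall s, #|[set i | x i && (m i == s)]| = #|[set i | y i && (m i == s)]|.
Proof.
move=> rank_eq.
(* [bigger q p] counts the [q]-blocks of size > p: it is the first difference
   of the rank sums, and its own first difference counts the blocks of size
   exactly [p.+1]. *)
have card_sum (q : pred 'I_k) : #|[set i | q i]| = (\sum_i q i)%N.
  by rewrite -sum1dep_card big_mkcond; apply: eq_bigr => i _; case: (q i).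
pose bigger (x : 'I_k -> bool) p := (\sum_i (x i && (p < m i)))%N.
have rank_step q p : (\sum_i (if q i then m i - p else m i) =
                      \sum_i (if q i then m i - p.+1 else m i) + bigger q p)%N.
  rewrite -big_split; apply: eq_bigr => i _.
  by case: (q i); case: (ltnP p (m i)) => /=; lia.
have bigger_step q p :
    bigger q p = (#|[set i | q i && (m i == p.+1)]| + bigger q p.+1)%N.
  rewrite card_sum -big_split; apply: eq_bigr => i _.
  by case: (q i); case: (ltngtP p.+1 (m i)) => /=; lia.
have bigger_eq p : bigger x p = bigger y p.
  by have := rank_eq p; rewrite (rank_step x) (rank_step y) rank_eq => /addnI.
case=> [|s].
  by rewrite !card_sum !big1 // => i _; rewrite eqn0Ngt m_gt0 andbF.
apply/eqP; rewrite -(eqn_add2r (bigger x s.+1)) -bigger_step bigger_eq bigger_step.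
by rewrite bigger_eq.
Qed.

Lemma similar_jordan_mxP lam lam' :
  similar_in unitmx (jordan_mx lam m) (jordan_mx lam' m) <->
  (forall z s, block_count lam m z s = block_count lam' m z s).
Proof.
split=> [sim_lam z s | count_eq].
  have block_countE lam0 :
      block_count lam0 m z s = #|[set i | (lam0 i == z) && (m i == s)]|.
    by apply: eq_card => i; rewrite !inE xpair_eqE.
  rewrite !block_countE; apply: card_size_eq_of_rank_sums => p.
  rewrite -!rank_jordan_mx_sub_exp; apply: similar_rank; apply: similar_exp.
  by have := similar_add_scalar (- z) sim_lam; rewrite raddfN.
have [|sg sg_inj sg_lam_m] :=
  fiber_matching (f := fun i => (lam i, m i)) (g := fun i => (lam' i, m i)).
  by case=> z s; apply: count_eq.
pose jentry (c : F) (a b : nat) : F :=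
  if a == b then c else if b == a.+1 then 1 else 0.
have -> : jordan_mx lam m = \mxdiag_i \matrix_(a, b) jentry (lam i) a b.
  by apply: eq_mxdiag => i; apply/matrixP => a b; rewrite !mxE.
have -> : jordan_mx lam' m = \mxdiag_i \matrix_(a, b) jentry (lam (sg i)) a b.
  apply: eq_mxdiag => i; apply/matrixP => a b.
  by case: (sg_lam_m i) => -> _; rewrite !mxE.
apply: (similar_perm_mxdiag (fun i => jentry (lam i)) sg_inj) => i.
by case: (sg_lam_m i).
Qed.

End JordanMatrix.

Section ConjugateInverse.
Variable C : numClosedFieldType.

Definition conj_inv (z : C) := (z^*)^-1.

Lemma conj_invK : involutive conj_inv.
Proof. by move=> z; rewrite /conj_inv fmorphV /= invrK conjCK. Qed.

Lemma conj_inv_fixE (z : C) : z != 0 -> (conj_inv z == z) = (`|z| == 1).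
Proof.
move=> z_neq0; rewrite -(pexpr_eq1 (n := 2)) // normCKC.
apply/eqP/eqP => [z_fix | /mulr1_eq //].
by rewrite -{2}z_fix mulfV // conjC_eq0.
Qed.

Lemma scalemx_det1 n (P : 'M[C]_n) :
  P \in unitmx -> exists2 a : C, a != 0 & \det (a *: P) = 1.
Proof.
case: n P => [|n] P uP; first by exists 1; rewrite ?oner_eq0 ?det_mx00.
have det_neq0 : \det P != 0 by rewrite -unitfE -unitmxE.
have rootK : n.+1.-root (\det P)^-1 ^+ n.+1 = (\det P)^-1 by rewrite rootCK.
exists (n.+1.-root (\det P)^-1); last by rewrite detZ rootK mulVf.
apply: contra_neq det_neq0 => root0; move: rootK.
by rewrite root0 expr0n /= => /esym/eqP; rewrite invr_eq0 => /eqP.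
Qed.

Lemma c_reversibleP n (A : 'M[C]_n) :
  c_reversible A <-> similar_in unitmx A (invmx (conj_mx A)).
Proof.
split=> [[h [det_h hAh]] | [P uP /(similarRL uP) PAP]].
  have uh : h \in unitmx by rewrite unitmxE det_h unitr1.
  by exists h => //; apply/similarRL; rewrite ?hAh.
have [a a_neq0 det_aP] := scalemx_det1 uP; exists (a *: P); split=> //.
rewrite PAP invmxZ ?unitmxE ?det_aP ?unitr1 // -!scalemxAl -scalemxAr scalerA.
by rewrite mulfV // scale1r.
Qed.

Lemma similar_invmx_conj_jordan_mx k (lam : 'I_k -> C) m :
  (forall i, lam i != 0) -> (forall i, (0 < m i)%N) ->
  similar_in unitmx (invmx (conj_mx (jordan_mx lam m)))
                    (jordan_mx (conj_inv \o lam) m).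
Proof.
move=> lam_neq0 m_gt0; rewrite /conj_mx /jordan_mx map_mxdiag.
rewrite invmx_mxdiag => [|i]; last first.
  by rewrite map_jordan_block unitmx_jordan_block ?conjC_eq0.
apply: similar_mxdiag => i; rewrite map_jordan_block.
by apply: similar_invmx_jordan_block; rewrite ?conjC_eq0.
Qed.

End ConjugateInverse.

Theorem proposition3p1 (R : realType) (n k : nat) (A : 'M[R[i]]_n)
  (lam : 'I_k -> R[i]) (m : 'I_k -> nat) :
  in_SL A ->
  has_jordan_form A lam m ->
  (forall i, lam i != 0) ->
  c_reversible A <->
  exists P : {set {set 'I_k}},
    partition P [set: 'I_k] /\
    forall B, B \in P ->
      (exists i, B = [set i] /\ `|lam i| = 1) \/
      (exists i j, i != j /\ B = [set i; j] /\ m j = m i /\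
                   lam j = (Num.conj (lam i))^-1 /\ `|lam i| != 1).
Proof.
move=> _ [m_gt0 [sum_m [P [uP PAP]]]] lam_neq0.
case: n / sum_m in A P uP PAP *; rewrite castmx_id in PAP.
have simAJ : similar_in unitmx A (jordan_mx lam m) by exists P => //; apply/similarRL.
have simAJ' := similar_trans (similar_invmx (similar_map _ simAJ))
                             (similar_invmx_conj_jordan_mx lam_neq0 m_gt0).
apply: iff_trans (c_reversibleP A) _; apply: iff_trans (similar_congr simAJ simAJ') _.
apply: iff_trans (similar_jordan_mxP m_gt0 _ _) _.
apply: iff_trans (iff_sym (block_pairingP lam m (@conj_invK _))) _.
have fixE i : conj_inv (lam i) = lam i <-> `|lam i| = 1.
  by rewrite (rwP eqP) conj_inv_fixE // (rwP eqP).
split=> -[Q [partQ Q_blocks]]; exists Q; split=> // B /Q_blocks.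
  case=> [[i [-> /fixE]] | [i [j [nij [-> [mj [lamj]]]]]]]; first by left; exists i.
  by rewrite conj_inv_fixE // => nfix; right; exists i, j.
case=> [[i [-> /fixE]] | [i [j [nij [-> [mj [lamj]]]]]]]; first by left; exists i.
by rewrite -conj_inv_fixE // => nfix; right; exists i, j.
Qed.
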